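(* Let $G=(V,E,\mathcal F)$ be a map on a closed orientable surface with a reference orientation, and let $a,b\in E$ be two edges. Then \[ (\eta_a)_b=\begin{cases}(\pi_b)_{h(a)}-(\pi_b)_{t(a)}+(\pi^*_b)_{r(a)}-(\pi^*_b)_{l(a)}+1, & \text{if } a=b,\\ (\pi_b)_{h(a)}-(\pi_b)_{t(a)}+(\pi^*_b)_{r(a)}-(\pi^*_b)_{l(a)}, & \text{otherwise.}\end{cases} \]
   Context: A map is a finite graph embedded in the surface so that every face is an open disc; each edge $e$ has tail $t(e)$, head $h(e)$, right shore $r(e)\in\mathcal F$ and left shore $l(e)\in\mathcal F$. For $v\in V$, $\delta v\in\mathbb R^E$ has entries $1$ on edges with head $v$, $-1$ on edges with tail $v$, $0$ otherwise; for $F\in\mathcal F$, $\partial F\in\mathbb R^E$ has entries $1$ on edges with $r(e)=F$, $-1$ on edges with $l(e)=F$, $0$ otherwise. $\mathcal C$ is the space of smooth circulations: vectors $\phi\in\mathbb R^E$ with $\phi\cdot\delta v=0$ for all $v$ and $\phi\cdot\partial F=0$ for all $F$. For $e\in E$, $\chi_e$ is the unit vector of $e$ and $\eta_e$ is the orthogonal projection of $\chi_e$ onto $\mathcal C$. Harmonic functions: for a connected graph $H$ with node set $W$ and nodes $a,b\in W$, $\pi_{a,b}\in\mathbb R^W$ is the unique vector with $\sum_{u}\pi_u=0$ and, for every node $v$, $\sum_{u:\,uv\in E(H)}\pi_u-d_v\pi_v$ equal to $1$ if $v=b$, $-1$ if $v=a$, and $0$ otherwise (neighbors counted with edge multiplicity,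 $d_v$ the degree). For an edge $e$ of $G$, $\pi_e=\pi_{t(e),h(e)}$ computed in $G$. The dual map $G^*$ has node set $\mathcal F$ and edge set $E$, where edge $e$ joins $l(e)$ (its tail) to $r(e)$ (its head); $\pi^*_e=\pi_{l(e),r(e)}$ computed in $G^*$. *)

From HB Require Import structures.
From mathcomp Require Import all_boot all_order all_algebra all_fingroup.
From mathcomp Require Import reals.
Set Implicit Arguments. Unset Strict Implicit. Unset Printing Implicit Defensive.
Import Order.TTheory GRing.Theory Num.Theory.
Local Open Scope ring_scope.

(* A map on a closed orientable surface (with a reference orientation) is
   encoded by a rotation system (Heffter-Edmonds): each edge e : E has two
   darts (e,false) (the end at the tail t(e), pointing along e) and
   (e,true) (the end at the head h(e)); sigma is the rotation of darts
   around vertices (counterclockwise w.r.t. the reference orientation of the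
   surface), alpha the edge involution, phi = sigma \o alpha the face
   permutation. *)

Definition dart_alpha (E : finType) (d : E * bool) : E * bool := (d.1, ~~ d.2).

Definition dart_phi (E : finType) (sigma : {perm E * bool}) (d : E * bool) :
  E * bool := sigma (dart_alpha d).

Definition is_orientable_map (E V F : finType) (sigma : {perm E * bool})
    (vert : E * bool -> V) (face : E * bool -> F) : Prop :=
  [/\
      (forall d d', (vert d == vert d') = fconnect sigma d d'),
      (forall v : V, exists d, vert d = v),
      (forall d d', (face d == face d') = fconnect (dart_phi sigma) d d'),
      (forall f : F, exists d, face d = f) &
      (forall d d', connect [rel x y | (y == sigma x) || (y == dart_alpha x)] d d')].

Section MapData.
Variables (E V F : finType) (vert : E * bool -> V) (face : E * bool -> F).
Definition tl (e : E) : V := vert (e, false).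
Definition hd (e : E) : V := vert (e, true).
Definition rsh (e : E) : F := face (e, false).
Definition lsh (e : E) : F := face (e, true).
End MapData.

Section Vectors.
Variables (R : realType) (E V F : finType).
Variables (t h : E -> V) (r l : E -> F).

Definition deltaV (v : V) (e : E) : R :=
  (h e == v)%:R - (t e == v)%:R.
Definition partialF (f : F) (e : E) : R :=
  (r e == f)%:R - (l e == f)%:R.
Definition dotE (x y : E -> R) : R := \sum_(e : E) x e * y e.

Definition smooth (phi : E -> R) : Prop :=
  (forall v, dotE phi (deltaV v) = 0) /\ (forall f, dotE phi (partialF f) = 0).

Definition chi (a : E) (e : E) : R := (e == a)%:R.

Definition is_eta (a : E) (eta : E -> R) : Prop :=
  smooth eta /\ forall psi, smooth psi -> dotE (fun e => chi a e - eta e) psi = 0.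
End Vectors.

(* Graph with node set W, edge set E and endpoints src, dst : E -> W
   (edges with multiplicity; a loop contributes 2 to the degree). *)
Section Harmonic.
Variables (R : realType) (E W : finType) (src dst : E -> W).

Definition neigh_sum (p : W -> R) (v : W) : R :=
  \sum_(e : E) ((src e == v)%:R * p (dst e) + (dst e == v)%:R * p (src e)).
Definition degree (v : W) : R :=
  \sum_(e : E) ((src e == v)%:R + (dst e == v)%:R).

Definition is_harmonic_pi (a b : W) (p : W -> R) : Prop :=
  \sum_(u : W) p u = 0 /\
  forall v, neigh_sum p v - degree v * p v = (v == b)%:R - (v == a)%:R.
End Harmonic.

From HB Require Import structures.
From mathcomp Require Import all_boot all_order all_algebra all_fingroup.
From mathcomp Require Import reals ring.
Set Implicit Arguments. Unset Strict Implicit. Unset Printing Implicit Defensive.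
Import Order.TTheory GRing.Theory Num.Theory.
Local Open Scope ring_scope.

(** Let [w := chi_b + grad pi_b + cograd pi*_b].  The harmonic equations say
    exactly that the gradient part cancels the divergence of [chi_b] at every
    vertex and the cograd part its circulation around every face, while on an
    orientable map every gradient is orthogonal to every cograd; hence [w] is
    smooth.  Since [eta_a - chi_a] is orthogonal to smooth vectors and [eta_a]
    itself is orthogonal to gradients and cograds, [w_a = <chi_a, w> =
    <eta_a, w> = (eta_a)_b], which is the claimed formula. *)

Section DotE.
Variables (R : realType) (E : finType).
Implicit Types (x y z : E -> R).

Lemma dotEC x y : dotE x y = dotE y x.
Proof. by apply: eq_bigr => e _; rewrite mulrC. Qed.

Lemma dotEDr x y z : dotE x (fun e => y e + z e) = dotE x y + dotE x z.
Proof. by rewrite -big_split; apply: eq_bigr => e _; rewrite mulrDr. Qed.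

Lemma dotE_chir x a : dotE x (chi R a) = x a.
Proof.
rewrite /dotE (bigD1 a) //= /chi eqxx mulr1 big1 ?addr0 // => e /negbTE ->.
by rewrite mulr0.
Qed.

Lemma dotE_chil a y : dotE (chi R a) y = y a.
Proof. by rewrite dotEC dotE_chir. Qed.

End DotE.

Section Gradient.
Variables (R : realType) (E W : finType) (src dst : E -> W).

Definition grad (p : W -> R) (e : E) : R := p (dst e) - p (src e).

Lemma grad_expand (p : W -> R) e :
  grad p e = \sum_w p w * deltaV R src dst w e.
Proof.
have pick x : \sum_w p w * (x == w)%:R = p x.
  rewrite (bigD1 x) //= eqxx mulr1 big1 ?addr0 // => w /negbTE.
  by rewrite eq_sym => ->; rewrite mulr0.
by rewrite /grad -pick -[p (src e)]pick -sumrB; apply: eq_bigr => w _;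
  rewrite mulrBr.
Qed.

Lemma dotE_grad (x : E -> R) (p : W -> R) :
  dotE x (grad p) = \sum_w p w * dotE x (deltaV R src dst w).
Proof.
rewrite /dotE; under eq_bigr do rewrite grad_expand mulr_sumr.
rewrite exchange_big /=; apply: eq_bigr => w _.
by rewrite mulr_sumr; apply: eq_bigr => e _; rewrite mulrCA.
Qed.

Lemma dotE_grad_eq0 (x : E -> R) (p : W -> R) :
  (forall w, dotE x (deltaV R src dst w) = 0) -> dotE x (grad p) = 0.
Proof. by move=> x_perp; rewrite dotE_grad big1 // => w _; rewrite x_perp mulr0. Qed.

Lemma dotE_grad_deltaV (p : W -> R) v :
  dotE (grad p) (deltaV R src dst v) = degree R src dst v * p v - neigh_sum src dst p v.
Proof.
rewrite /dotE /degree /neigh_sum mulr_suml -sumrB; apply: eq_bigr => e _.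
rewrite /grad /deltaV.
by case: (eqVneq (src e) v) => [->|_]; case: (eqVneq (dst e) v) => [->|_];
  rewrite /= ?mulr1n ?mulr0n; ring.
Qed.

Lemma harmonic_dotE_grad_deltaV a b (p : W -> R) v :
  is_harmonic_pi src dst a b p ->
  dotE (grad p) (deltaV R src dst v) = (v == a)%:R - (v == b)%:R.
Proof.
by case=> _ /(_ v) harm; rewrite dotE_grad_deltaV -opprB harm opprB.
Qed.

End Gradient.

Section Smooth.
Variables (R : realType) (E V F : finType) (t h : E -> V) (r l : E -> F).

Lemma partialF_deltaV f : partialF R r l f = deltaV R l r f.
Proof. by []. Qed.

Lemma smooth_dotE_grad (phi : E -> R) (p : V -> R) :
  smooth t h r l phi -> dotE phi (grad t h p) = 0.
Proof. by case=> perp_delta _; apply: dotE_grad_eq0. Qed.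

Lemma smooth_dotE_cograd (phi : E -> R) (q : F -> R) :
  smooth t h r l phi -> dotE phi (grad l r q) = 0.
Proof. by case=> _ perp_partial; apply: dotE_grad_eq0. Qed.

Lemma is_eta_dotE a (eta psi : E -> R) :
  is_eta t h r l a eta -> smooth t h r l psi -> dotE eta psi = psi a.
Proof.
case=> _ /[apply]; rewrite /dotE; under eq_bigr do rewrite mulrBl.
rewrite sumrB => /eqP; rewrite subr_eq0 => /eqP <-; exact: dotE_chil.
Qed.

End Smooth.

Section OrientableMap.
Variables (R : realType) (E V F : finType).
Variables (sigma : {perm E * bool}) (vert : E * bool -> V) (face : E * bool -> F).
Hypothesis map_sigma : is_orientable_map sigma vert face.

Lemma vert_sigma d : vert (sigma d) = vert d.
Proof.
case: map_sigma => vertE _ _ _ _.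
by apply/esym/eqP; rewrite vertE; apply: fconnect1.
Qed.

Lemma face_alpha d : face (dart_alpha d) = face (sigma d).
Proof.
case: map_sigma => _ _ faceE _ _.
have -> : sigma d = dart_phi sigma (dart_alpha d).
  by rewrite /dart_phi /dart_alpha /= negbK -surjective_pairing.
by apply/eqP; rewrite faceE; apply: fconnect1.
Qed.

(* Each edge contributes through its two darts; the dart sum vanishes because
   [sigma] permutes the darts and keeps them at their vertex. *)
Lemma dotE_deltaV_partialF v f :
  dotE (deltaV R (tl vert) (hd vert) v) (partialF R (rsh face) (lsh face) f) = 0.
Proof.
pose T d : R :=
  (vert d == v)%:R * ((face (dart_alpha d) == f)%:R - (face d == f)%:R).
have -> : dotE (deltaV R (tl vert) (hd vert) v) (partialF R (rsh face) (lsh face) f)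
    = \sum_d T d.
  rewrite [RHS](_ : _ = \sum_e \sum_s T (e, s)); last first.
    by rewrite pair_bigA; apply: eq_bigr => -[].
  apply: eq_bigr => e _.
  by rewrite big_bool /T /deltaV /partialF /tl /hd /rsh /lsh /dart_alpha /=; ring.
rewrite /T; under eq_bigr do rewrite face_alpha mulrBr.
rewrite sumrB [X in _ - X](reindex_inj (@perm_inj _ sigma)) /=.
by under [X in _ - X]eq_bigr do rewrite vert_sigma; rewrite subrr.
Qed.

Lemma smooth_transfer b (pib : V -> R) (pisb : F -> R) :
  is_harmonic_pi (tl vert) (hd vert) (tl vert b) (hd vert b) pib ->
  is_harmonic_pi (lsh face) (rsh face) (lsh face b) (rsh face b) pisb ->
  smooth (tl vert) (hd vert) (rsh face) (lsh face)
    (fun e => chi R b e + grad (tl vert) (hd vert) pib e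
              + grad (lsh face) (rsh face) pisb e).
Proof.
move=> harm_pib harm_pisb; split=> [v|f]; rewrite dotEC 2!dotEDr dotE_chir.
- rewrite dotEC (harmonic_dotE_grad_deltaV v harm_pib).
  rewrite dotE_grad_eq0; last by move=> f; apply: dotE_deltaV_partialF.
  by rewrite /deltaV !(eq_sym v); ring.
- rewrite partialF_deltaV [X in _ + X]dotEC (harmonic_dotE_grad_deltaV f harm_pisb).
  rewrite dotE_grad_eq0; last by move=> v; rewrite dotEC dotE_deltaV_partialF.
  by rewrite /deltaV !(eq_sym f); ring.
Qed.

End OrientableMap.

Theorem mainTheorem4 (R : realType) (E V F : finType)
  (sigma : {perm E * bool}) (vert : E * bool -> V) (face : E * bool -> F)
  (Hmap : is_orientable_map sigma vert face)
  (a b : E) (eta : E -> R) (pib : V -> R) (pisb : F -> R) :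
  is_eta (tl vert) (hd vert) (rsh face) (lsh face) a eta ->
  is_harmonic_pi (tl vert) (hd vert) (tl vert b) (hd vert b) pib ->
  is_harmonic_pi (lsh face) (rsh face) (lsh face b) (rsh face b) pisb ->
  eta b = pib (hd vert a) - pib (tl vert a)
          + pisb (rsh face a) - pisb (lsh face a) + (a == b)%:R.
Proof.
move=> eta_a harm_pib harm_pisb.
have smooth_eta := eta_a.1.
have := is_eta_dotE eta_a (smooth_transfer Hmap harm_pib harm_pisb).
rewrite 2!dotEDr dotE_chir (smooth_dotE_grad _ smooth_eta).
rewrite (smooth_dotE_cograd _ smooth_eta) !addr0 => ->.
by rewrite /chi /grad; ring.
Qed.
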